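(* For no natural number $k\ge 0$ is there a one-tape infinite time Turing machine with a $k$-cell scratch pad that computes the stretch function $s(a)=\langle a_0\,0\,0\,a_1\,0\,0\,a_2\,0\,0\cdots\rangle$ in such a way that on every input $a\in\mathbb{R}$ it halts within at most $\omega$ steps.
   Context: $\mathbb{R}=2^\omega$; $a_i$ is the $i$-th digit of $a$. A one-tape infinite time Turing machine with a $k$-cell scratch pad has a single tape with cells indexed by $\{-k,\dots,-1\}\cup\omega$ holding values in $\{0,1\}$, the cells $-k,\dots,-1$ forming the scratch pad (for $k=0$ this is an ordinary one-tape machine), one head, and a program with finitely many states including start, halt and a limit state. It operates as an ordinary Turing machine at successor stages (moving left from the leftmost cell leaves the head in place); at limit stages the head returns to the leftmost cell, the state becomes the limit state, and each cell takes the $\limsup$ of its earlier values. The input $a$ is written on cells $0,1,2,\dots$ with the pad initially $0$, and upon halting the output is the contents of cells $0,1,2,\dots$. *)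

From mathcomp Require Import all_boot.
Set Implicit Arguments. Unset Strict Implicit. Unset Printing Implicit Defensive.

(* Reals are elements of Cantor space 2^omega: a : nat -> bool, a_i = a i. *)
Definition real := nat -> bool.

Definition stretch (a : real) : real :=
  fun i => if i %% 3 == 0 then a (i %/ 3) else false.

(* A one-tape ITTM program: a finite set of states with designated start,
   halt and limit states (not required to be distinct), and a transition
   function: (state, symbol read) |-> (new state, symbol written, direction),
   direction true = right, false = left. *)
Record machine := Machine {
  mstate : finType;
  mstart : mstate;
  mhalt  : mstate;
  mlimit : mstate;
  mdelta : mstate -> bool -> mstate * bool * bool }.

(* Configurations.  With a k-cell scratch pad, the tape cell with index
   j in {-k,...,-1} U omega is stored at position p = j + k : nat, so
   position 0 is the leftmost cell. *)
Record config (M : machine) := Config {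
  cstate : mstate M;
  chead  : nat;
  ctape  : nat -> bool }.

(* One successor step.  The halt state is absorbing (the machine has
   stopped).  Moving left from position 0 leaves the head in place
   (truncated predecessor). *)
Definition step (M : machine) (c : config M) : config M :=
  if cstate c == mhalt M then c else
  let: (q', w, d) := mdelta (cstate c) (ctape c (chead c)) in
  Config q' (if d then (chead c).+1 else (chead c).-1)
         (fun p => if p == chead c then w else ctape c p).

Definition init (M : machine) (k : nat) (a : real) : config M :=
  Config (mstart M) 0 (fun p => if p < k then false else a (p - k)).

Definition run (M : machine) (k : nat) (a : real) (n : nat) : config M :=
  iter n (@step M) (init M k a).

(* The content of position p at stage omega: limsup of earlier values,
   i.e. it is 1 iff the cell held 1 at cofinally many stages. *)
Definition cell_at_omega (M : machine) (k : nat) (a : real) (p : nat) : Prop :=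
  forall N, exists n, N <= n /\ ctape (run M k a n) p = true.

(* Either the halt state is reached at a
   finite stage n, or it is never reached at a finite stage and the
   configuration at stage omega (state = limit state, tape = limsup) is
   in the halt state. *)
Definition halts_within_omega_with_output (M : machine) (k : nat) (a b : real)
  : Prop :=
  (exists n, cstate (run M k a n) = mhalt M /\
             forall i, ctape (run M k a n) (k + i) = b i)
  \/ ((forall n, cstate (run M k a n) <> mhalt M) /\ mlimit M = mhalt M /\
      forall i, cell_at_omega M k a (k + i) <-> b i = true).

From mathcomp Require Import all_boot zify boolp.
Set Implicit Arguments. Unset Strict Implicit. Unset Printing Implicit Defensive.

(* Every gap cell
   3j+1 of the output must eventually hold 0, and the head must reach every
   input cell.  Once the head first reaches input cell c, the rest of the run,
   hence the output, hence the input, is determined by the state, the tape left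
   of c and the input from c on.  If by then the first m gap cells are 0 and
   stay so ("quiet"), they carry no information, so for 4 |Q| 2^k <= 2^m at
   most a quarter of the long enough prefixes extend to a quiet input.  The
   quiet sets increase with c and cover Cantor space; but the complements
   contain a decreasing chain of open sets of measure at least 3/4, and
   approximating these by clopen sets and using compactness yields a point in
   all of them. *)

Lemma count_has_le (T I : Type) (A : I -> pred T) (r : seq I) (s : seq T) :
  count (fun x => has (A^~ x) r) s <= \sum_(i <- r) count (A i) s.
Proof.
elim: r => [|i r IH]; first by rewrite big_nil count_pred0.
rewrite big_cons; apply: leq_trans (leq_add (leqnn _) IH).
by rewrite -(count_predUI (A i)) leq_addr.
Qed.

Lemma count_predI_split (T : Type) (a b : pred T) s :
  count a s = count (predI a b) s + count (predI a (predC b)) s.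
Proof. by elim: s => //= x s ->; case: (a x); case: (b x) => /=; lia. Qed.

Lemma size_iota_notin (Z : seq nat) P : uniq Z -> all (fun z => z < P) Z ->
  size [seq x <- iota 0 P | x \notin Z] = P - size Z.
Proof.
move=> Zu ZP; have := count_predC (mem Z) (iota 0 P); rewrite size_iota size_filter.
have -> : count (mem Z) (iota 0 P) = size Z.
  rewrite -size_filter; apply/perm_size/uniq_perm; rewrite ?filter_uniq ?iota_uniq //.
  by move=> x; rewrite mem_filter mem_iota /=; case: (boolP (x \in Z)) => // /(allP ZP).
by move=> E; rewrite -{2}E addKn.
Qed.

Fixpoint words (n : nat) : seq (seq bool) :=
  if n is n'.+1 then [seq rcons w b | w <- words n', b <- [:: false; true]]
  else [:: [::]].

Lemma count_words_succ (P : pred (seq bool)) n :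
  count P (words n.+1) =
  count (fun w => P (rcons w false)) (words n) + count (fun w => P (rcons w true)) (words n).
Proof.
rewrite /=; elim: (words n) => //= w s ->.
by case: (P (rcons w false)); case: (P (rcons w true)) => /=; lia.
Qed.

Lemma size_words n : size (words n) = 2 ^ n.
Proof. by elim: n => [//|n IH]; rewrite size_allpairs IH expnS mulnC. Qed.

Lemma mem_words n w : (w \in words n) = (size w == n).
Proof.
elim: n w => [|n IH] w; first by rewrite inE; case: w.
apply/allpairsP/idP => [[[v b] [Hv _ ->]]|]; first by rewrite size_rcons eqSS -IH.
case/lastP: w => [//|v b]; rewrite size_rcons eqSS -IH => Hv.
by exists (v, b); rewrite /= !inE; case: b.
Qed.

Lemma words_uniq n : uniq (words n).
Proof.
elim: n => [//|n IH]; rewrite allpairs_uniq // => -[v b] [v' b'] _ _ /= /eqP.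
by rewrite eqseq_rcons => /andP [/eqP -> /eqP ->].
Qed.

Lemma count_words_le (P : pred (seq bool)) n : count P (words n) <= 2 ^ n.
Proof. by rewrite -(size_words n) count_size. Qed.

Lemma count_words_take (P : pred (seq bool)) n d :
  count (fun w => P (take n w)) (words (n + d)) = 2 ^ d * count P (words n).
Proof.
elim: d => [|d IH].
  rewrite addn0 mul1n; apply: eq_in_count => w; rewrite mem_words => /eqP <-.
  by rewrite take_size.
rewrite addnS count_words_succ expnS -mulnA -IH mul2n -addnn.
by congr (_ + _); apply: eq_in_count => w; rewrite mem_words => /eqP wn;
  rewrite -cats1 takel_cat // wn leq_addr.
Qed.

Lemma dyadic_density_stabilizes (f : nat -> nat) (D n1 : nat) : 0 < D ->
  (forall n, f n <= 2 ^ n) -> (forall n d, 2 ^ d * f n <= f (n + d)) ->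
  exists2 n0, n1 <= n0 & forall d, (f (n0 + d) - 2 ^ d * f n0) * D <= 2 ^ (n0 + d).
Proof.
move=> D_gt0 f_le f_grow; apply: contrapT => no_level.
have jump n : n1 <= n -> exists d, 2 ^ (n + d) < (f (n + d) - 2 ^ d * f n) * D.
  move=> n1n; apply: contrapT => /forallNP small; apply: no_level; exists n => // d.
  by rewrite leqNgt; apply/negP/small.
(* [f n / 2 ^ n] never decreases and gains more than [1 / D] at each jump. *)
have climb j : exists2 n, n1 <= n & j * 2 ^ n <= f n * D.
  elim: j => [|j [n n1n IH]]; first by exists n1.
  have [d gain] := jump n n1n; exists (n + d); first exact: leq_trans n1n (leq_addr d n).
  have := f_grow n d; move: gain IH; rewrite expnD.
  set X := 2 ^ n; set Y := 2 ^ d; set F := f (n + d); set G := f n => gain IH grow.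
  have split : F * D = (F - Y * G) * D + Y * G * D by rewrite -mulnDl subnK.
  have : Y * (j * X) <= Y * (G * D) by rewrite leq_mul2l IH orbT.
  rewrite split mulSn; nia.
have [n _] := climb D.+1; have := f_le n; set X := 2 ^ n; nia.
Qed.

Lemma geometric_error_lt (e : nat -> nat) X P : 0 < X ->
  (forall q, q <= P -> 2 ^ q.+3 * e q <= X) -> 4 * \sum_(0 <= q < P.+1) e q < X.
Proof.
move=> X_gt0 small.
suff bound : 4 * (\sum_(0 <= q < P.+1) e q) * 2 ^ P.+1 + X <= X * 2 ^ P.+1.
  by rewrite -(ltn_pmul2r (expn_gt0 2 P.+1)); apply: leq_trans bound; rewrite -addn1 leq_add2l.
elim: P small => [|P IH] small.
  by rewrite big_nat1; have := small 0 (leqnn 0); lia.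
rewrite big_nat_recr //=.
have := IH (fun q qP => small q (leqW qP)); have := small P.+1 (leqnn _).
rewrite !expnS; set Y := 2 ^ P; set S := \sum_(0 <= q < P.+1) e q; nia.
Qed.

Section ClopenChain.

(* [S P], read on prefixes of length [len P], describes a clopen subset of
   Cantor space. *)
Variables (S : nat -> pred (seq bool)) (len : nat -> nat).
Hypothesis S_decr : forall P Q a, P <= Q -> S Q (mkseq a (len Q)) -> S P (mkseq a (len P)).
Hypothesis S_nonempty : forall P, exists a, S P (mkseq a (len P)).

Let extendable (w : seq bool) :=
  forall P, exists2 a, S P (mkseq a (len P)) & mkseq a (size w) = w.

Lemma extendable_rcons w : extendable w -> exists b, extendable (rcons w b).
Proof.
move=> ext_w; apply: contrapT => /forallNP stuck.
have [P0 stuck0] := (existsNP _).2 (stuck false).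
have [P1 stuck1] := (existsNP _).2 (stuck true).
have [a Sa wa] := ext_w (maxn P0 P1).
have wb : mkseq a (size (rcons w (a (size w)))) = rcons w (a (size w)).
  by rewrite size_rcons mkseqS wa.
case: (a (size w)) wb => wb; [apply: stuck1 | apply: stuck0]; exists a => //;
  by apply: S_decr Sa; rewrite ?leq_maxl ?leq_maxr.
Qed.

Lemma clopen_chain_common_point : exists a, forall P, S P (mkseq a (len P)).
Proof.
pose next w := if `[< extendable (rcons w true) >] then rcons w true else rcons w false.
pose ws n := iter n next [::].
have ws_succ n : exists b, ws n.+1 = rcons (ws n) b.
  by rewrite /= /next; case: ifP => _; eexists.
have size_ws n : size (ws n) = n.
  by elim: n => // n IH; have [b ->] := ws_succ n; rewrite size_rcons IH.
have ws_ext n : extendable (ws n).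
  elim: n => [P|n IH]; first by have [a Sa] := S_nonempty P; exists a.
  rewrite /= /next; case: asboolP => // not_true.
  by have [[]] := extendable_rcons IH.
pose a i := nth false (ws i.+1) i.
have mkseq_a n : mkseq a n = ws n.
  elim: n => // n IH; have [b wsS] := ws_succ n.
  by rewrite mkseqS IH /a wsS nth_rcons size_ws ltnn eqxx.
exists a => P; have [a' Sa' pre] := ws_ext (len P) P.
by rewrite mkseq_a -pre size_ws.
Qed.

End ClopenChain.

Definition meets (A : (nat -> bool) -> Prop) (w : seq bool) : bool :=
  `[< exists2 a, A a & mkseq a (size w) = w >].

Lemma take_mkseq (T : Type) (f : nat -> T) n m : take n (mkseq f m) = mkseq f (minn n m).
Proof. by rewrite /mkseq -map_take take_iota. Qed.

Lemma meets_take A n w : meets A w -> meets A (take n w).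
Proof.
move/asboolP => [a Aa wa]; apply/asboolP; exists a => //.
by rewrite size_take_min -{2}wa take_mkseq.
Qed.

Section SparseChain.

Variables (G : nat -> (nat -> bool) -> Prop) (L : nat -> nat).
Hypothesis G_incr : forall p q a, p <= q -> G p a -> G q a.
Hypothesis G_sparse : forall p n, L p <= n -> 4 * count (meets (G p)) (words n) <= 2 ^ n.

(* The words avoiding [G p] span an open set disjoint from [G p], of measure
   at least 3/4; [avoid_err p n0] measures how far the clopen set spanned by
   the avoiding words of length [n0] falls short of it. *)
Let avoids p w := ~~ meets (G p) w.

Let avoid_err p n0 N :=
  count (predI (avoids p) (predC (fun w => avoids p (take n0 w)))) (words N).

Lemma avoids_take p n w : avoids p (take n w) -> avoids p w.
Proof. exact/contraNN/meets_take. Qed.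

Lemma avoids_anti p q w : p <= q -> avoids q w -> avoids p w.
Proof.
move=> pq; apply/contraNN => /asboolP [a Ga wa]; apply/asboolP; exists a => //.
exact: G_incr Ga.
Qed.

Lemma avoid_err_small p : exists n0, L p <= n0 /\
  forall N, n0 <= N -> 2 ^ p.+3 * avoid_err p n0 N <= 2 ^ N.
Proof.
pose f n := count (avoids p) (words n).
have f_grow n d : 2 ^ d * f n <= f (n + d).
  by rewrite -count_words_take; apply: sub_count => w /avoids_take.
have [n0 Ln0 stable] := @dyadic_density_stabilizes f (2 ^ p.+3) (L p)
  (expn_gt0 _ _) (@count_words_le _) f_grow.
exists n0; split => // N n0N; have := stable (N - n0); rewrite subnKC // mulnC.
have -> : 2 ^ (N - n0) * f n0 = count (fun w => avoids p (take n0 w)) (words N).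
  by rewrite -count_words_take subnKC.
rewrite /f (count_predI_split _ (fun w => avoids p (take n0 w))) -/(avoid_err p n0 N).
have -> : count (predI (avoids p) (fun w => avoids p (take n0 w))) (words N) =
          count (fun w => avoids p (take n0 w)) (words N).
  by apply: eq_count => w; apply/andb_idl/avoids_take.
by rewrite addKn.
Qed.

Section Levels.

Variable lev : nat -> nat.
Hypothesis lev_ge : forall p, L p <= lev p.
Hypothesis lev_err : forall p N, lev p <= N -> 2 ^ p.+3 * avoid_err p (lev p) N <= 2 ^ N.

Let horizon P := \max_(q < P.+1) lev q.

Let cap P w := all (fun q => avoids q (take (lev q) w)) (index_iota 0 P.+1).

Lemma lev_le_horizon q P : q <= P -> lev q <= horizon P.
Proof.
by move=> qP; apply: (@leq_bigmax _ (fun i : 'I_P.+1 => lev i) (Ordinal (qP : q < P.+1))).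
Qed.

Lemma cap_nonempty P : has (cap P) (words (horizon P)).
Proof.
set N := horizon P.
have errors : count (predI (avoids P) (predC (cap P))) (words N) <=
              \sum_(0 <= q < P.+1) avoid_err q (lev q) N.
  apply: leq_trans (count_has_le _ _ _); apply: sub_count => w /andP [av]; rewrite /cap.
  move=> /allPn [q qP nav]; apply/hasP; exists q => //.
  rewrite /= nav andbT; apply: avoids_anti av; by rewrite mem_index_iota in qP.
have small := @geometric_error_lt (fun q => avoid_err q (lev q) N) (2 ^ N) P
  (expn_gt0 2 N) (fun q qP => lev_err (lev_le_horizon qP)).
have dense : 4 * count (meets (G P)) (words N) <= 2 ^ N.
  exact: G_sparse (leq_trans (lev_ge P) (lev_le_horizon (leqnn P))).
have total := count_predC (avoids P) (words N); rewrite size_words in total.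
have := count_predI_split (avoids P) (cap P) (words N).
have : count (predI (avoids P) (cap P)) (words N) <= count (cap P) (words N).
  by apply: sub_count => w /andP [].
rewrite has_count; move: total dense small errors.
have -> : count (predC (avoids P)) (words N) = count (meets (G P)) (words N).
  by apply: eq_count => w; rewrite /= negbK.
lia.
Qed.

Lemma cap_prefix P a :
  cap P (mkseq a (horizon P)) = all (fun q => avoids q (mkseq a (lev q))) (index_iota 0 P.+1).
Proof.
apply: eq_in_all => q; rewrite mem_index_iota ltnS => /andP [_ qP].
by rewrite take_mkseq (minn_idPl (lev_le_horizon qP)).
Qed.

Lemma levels_common_miss : exists a, forall p, ~ G p a.
Proof.
have decr P Q a : P <= Q -> cap Q (mkseq a (horizon Q)) -> cap P (mkseq a (horizon P)).
  rewrite !cap_prefix => PQ /allP capQ; apply/allP => q; rewrite mem_index_iota => qP.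
  by apply: capQ; rewrite mem_index_iota; lia.
have nonempty P : exists a, cap P (mkseq a (horizon P)).
  have /hasP [w] := cap_nonempty P; rewrite mem_words => /eqP <- capw.
  by exists (nth false w); rewrite mkseq_nth.
have [a cap_a] := clopen_chain_common_point decr nonempty.
exists a => p Gpa; have := cap_a p; rewrite cap_prefix => /allP /(_ p).
rewrite mem_index_iota ltnSn => /(_ isT) /negP; apply; apply/asboolP.
by exists a; rewrite ?size_mkseq.
Qed.

End Levels.

Lemma sparse_chain_not_covering : exists a, forall p, ~ G p a.
Proof.
have [lev lev_spec] := choice avoid_err_small.
exact: (levels_common_miss (fun p => (lev_spec p).1) (fun p => (lev_spec p).2)).
Qed.

End SparseChain.

Section Machine.

Variable M : machine.

Lemma config_eq (c c' : config M) :
  cstate c = cstate c' -> chead c = chead c' -> ctape c =1 ctape c' -> c = c'.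
Proof. by case: c c' => q h t [q' h' t'] /= -> -> /funext ->. Qed.

Lemma step_halted (c : config M) : cstate c = mhalt M -> step c = c.
Proof. by rewrite /step => ->; rewrite eqxx. Qed.

Lemma head_step_le (c : config M) : chead (step c) <= (chead c).+1.
Proof.
rewrite /step; case: eqP => _ //; case: (mdelta _ _) => [[q w] []] /=; lia.
Qed.

Lemma tape_step_other (c : config M) p : p != chead c -> ctape (step c) p = ctape c p.
Proof.
move=> p_head; rewrite /step; case: eqP => _ //.
by case: (mdelta _ _) => [[q w] d] /=; rewrite (negbTE p_head).
Qed.

Lemma step_agree (c c' : config M) P :
  cstate c = cstate c' -> chead c = chead c' -> chead c < P ->
  (forall p, p < P -> ctape c p = ctape c' p) ->
  [/\ cstate (step c) = cstate (step c'), chead (step c) = chead (step c') &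
      forall p, p < P -> ctape (step c) p = ctape (step c') p].
Proof.
case: c c' => q h t [q' h' t'] /= <- <- hP tt'.
rewrite /step /=; case: eqP => _ //=.
by rewrite (tt' h hP); case: (mdelta _ _) => [[q1 w] d] /=; split => // p pP; rewrite tt'.
Qed.

Variable k : nat.

Lemma run_succ a n : run M k a n.+1 = step (run M k a n).
Proof. exact: iterS. Qed.

Lemma run_init_tape a p : ctape (run M k a 0) p = if p < k then false else a (p - k).
Proof. by []. Qed.

Lemma run_shift_eq a b t t' :
  run M k a t = run M k b t' -> forall i, run M k a (i + t) = run M k b (i + t').
Proof. by move=> E i; rewrite /run !iterD -!/(run _ _ _ _) E. Qed.

Lemma run_halted a n :
  cstate (run M k a n) = mhalt M -> forall d, run M k a (d + n) = run M k a n.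
Proof. by move=> halted; elim=> // d IH; rewrite addSn run_succ IH step_halted. Qed.

Lemma head_run_le a n : chead (run M k a n) <= n.
Proof. by elim: n => // n IH; rewrite run_succ; apply: leq_trans (head_step_le _) _. Qed.

Lemma run_tape_unvisited a n P : (forall i, i < n -> chead (run M k a i) < P) ->
  forall p, P <= p -> ctape (run M k a n) p = ctape (run M k a 0) p.
Proof.
elim: n => // n IH below p Pp; rewrite run_succ tape_step_other.
  by apply: IH => // i ilt; apply: below; apply: ltnW.
by apply/eqP => pE; have := below n (ltnSn n); rewrite -pE ltnNge Pp.
Qed.

Lemma run_agree a b n P :
  (forall p, p < P -> ctape (run M k a 0) p = ctape (run M k b 0) p) ->
  (forall i, i < n -> chead (run M k a i) < P) ->
  [/\ cstate (run M k a n) = cstate (run M k b n),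
      chead (run M k a n) = chead (run M k b n) &
      forall p, p < P -> ctape (run M k a n) p = ctape (run M k b n) p].
Proof.
move=> init; elim: n => [|n IH] below; first by split.
have [q_eq h_eq t_eq] := IH (fun i ilt => below i (ltnW ilt)).
by rewrite !run_succ; apply: step_agree => //; apply: below.
Qed.

Lemma init_agree a b c : (forall i, i < c -> a i = b i) ->
  forall p, p < k + c -> ctape (run M k a 0) p = ctape (run M k b 0) p.
Proof. by move=> ab p pc; rewrite !run_init_tape; case: ltnP => // kp; rewrite ab //; lia. Qed.

Lemma cell_at_omega_shift a b t t' x :
  (forall i, run M k a (i + t) = run M k b (i + t')) ->
  cell_at_omega M k a x -> cell_at_omega M k b x.
Proof.
move=> shift cof N; have [n [Nn xn]] := cof (N + t).
exists (n - t + t'); split; first lia.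
by rewrite -shift subnK // (leq_trans (leq_addl N t) Nn).
Qed.

Lemma output_eq_of_run_eq a b t t' oa ob : run M k a t = run M k b t' ->
  halts_within_omega_with_output M k a oa ->
  halts_within_omega_with_output M k b ob -> oa =1 ob.
Proof.
move=> /run_shift_eq shift.
case=> [[n [an oan]] | [anh [_ oan]]] [[n' [bn obn]] | [bnh [_ obn]]] j.
- have ra : run M k a (n + n' + t) = run M k a n.
    by rewrite -(run_halted an (n' + t)); congr run; lia.
  have rb : run M k b (n + n' + t') = run M k b n'.
    by rewrite -(run_halted bn (n + t')); congr run; lia.
  by rewrite -oan -obn -ra -rb shift.
- by case: (bnh (n + t')); rewrite -shift addnC (run_halted an).
- by case: (anh (n' + t)); rewrite shift addnC (run_halted bn).
- apply/idP/idP => [/oan/(cell_at_omega_shift shift)/obn // | /obn].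
  by move/(cell_at_omega_shift (fun i => esym (shift i)))/oan.
Qed.

End Machine.

Lemma stretch_mul3 a j : stretch a (3 * j) = a j.
Proof. by rewrite /stretch (_ : (3 * j) %% 3 = 0) ?mulKn //; lia. Qed.

Lemma stretch_gap a j : stretch a (3 * j + 1) = false.
Proof. by rewrite /stretch (_ : (3 * j + 1) %% 3 = 1) //; lia. Qed.

Section StretchMachine.

Variables (M : machine) (k : nat).
Hypothesis computes : forall a, halts_within_omega_with_output M k a (stretch a).

Lemma run_eq_input_eq a b t t' : run M k a t = run M k b t' -> a =1 b.
Proof.
move=> E j; have := output_eq_of_run_eq E (computes a) (computes b) (3 * j).
by rewrite !stretch_mul3.
Qed.

Lemma gap_cell_vanishes a j :
  exists N, forall t, N <= t -> ctape (run M k a t) (k + (3 * j + 1)) = false.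
Proof.
case: (computes a) => [[n [an out]] | [_ [_ out]]].
  by exists n => t nt; rewrite -(subnK nt) run_halted // out stretch_gap.
have not_cof : ~ cell_at_omega M k a (k + (3 * j + 1)) by move/out; rewrite stretch_gap.
apply: contrapT => /forallNP never; apply: not_cof => N.
have /existsNP [t /not_implyP [Nt tape_t]] := never N.
by exists t; split => //; case: (ctape _ _) tape_t.
Qed.

Lemma gap_cells_vanish a m : exists N, forall t, N <= t ->
  forall j, j < m -> ctape (run M k a t) (k + (3 * j + 1)) = false.
Proof.
elim: m => [|m [N vanish]]; first by exists 0.
have [N' vanish'] := gap_cell_vanishes a m.
exists (maxn N N') => t; rewrite geq_max => /andP [Nt N't] j.
by rewrite ltnS leq_eqVlt => /predU1P [-> | jm]; [apply: vanish' | apply: vanish].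
Qed.

(* A head that never reaches input cell [c] cannot notice that the gap cell
   [3 * c + 1] was switched on, which then stays 1 forever. *)
Lemma head_reaches a c : exists n, k + c <= chead (run M k a n).
Proof.
apply: contrapT => /forallNP stays.
have below n : chead (run M k a n) < k + c by rewrite ltnNge; apply/negP/stays.
pose a' i := (i == 3 * c + 1) || a i.
have agree : forall p, p < k + c -> ctape (run M k a 0) p = ctape (run M k a' 0) p.
  by apply: init_agree => i ic; rewrite /a' (_ : (i == _) = false) //; apply/eqP; lia.
have below' n : chead (run M k a' n) < k + c.
  by have [_ <- _] := run_agree (n := n) agree (fun i _ => below i).
have marked t : ctape (run M k a' t) (k + (3 * c + 1)) = true.
  rewrite (@run_tape_unvisited _ _ _ _ (k + c)) ?run_init_tape; last by lia.
    by rewrite ltnNge leq_addr addKn /a' eqxx.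
  by move=> i _; apply: below'.
have [N vanish] := gap_cell_vanishes a' c.
by have := vanish N (leqnn N); rewrite marked.
Qed.

Definition entry a c : nat := ex_minn (head_reaches a c).

Lemma entry_spec a c : k + c <= chead (run M k a (entry a c)) /\
  forall i, k + c <= chead (run M k a i) -> entry a c <= i.
Proof. by rewrite /entry; case: ex_minnP. Qed.

Lemma before_entry a c i : i < entry a c -> chead (run M k a i) < k + c.
Proof. by rewrite !ltnNge; apply/contraNN/(entry_spec a c).2. Qed.

Lemma entry_head a c : chead (run M k a (entry a c)) = k + c.
Proof.
apply/eqP; rewrite eqn_leq (entry_spec a c).1 andbT.
case E: (entry a c) => [|n]; first by have := head_run_le M k a 0.
have := @before_entry a c n; rewrite E ltnSn => /(_ isT) below.
by rewrite run_succ; apply: leq_trans (head_step_le _) below.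
Qed.

Lemma entry_ge a c : k + c <= entry a c.
Proof. by rewrite -{1}(entry_head a c) head_run_le. Qed.

Lemma entry_mono a c c' : c <= c' -> entry a c <= entry a c'.
Proof. by move=> cc'; apply: (entry_spec a c).2; rewrite entry_head leq_add2l. Qed.

Lemma entry_le_of_agree a b c : (forall i, i < c -> a i = b i) -> entry b c <= entry a c.
Proof.
move=> ab; apply: (entry_spec b c).2.
have [_ <- _] := run_agree (n := entry a c) (init_agree M ab) (@before_entry a c).
by rewrite entry_head.
Qed.

Lemma entry_agree a b c : (forall i, i < c -> a i = b i) ->
  [/\ entry a c = entry b c,
      cstate (run M k a (entry a c)) = cstate (run M k b (entry b c)) &
      forall p, p < k + c ->
        ctape (run M k a (entry a c)) p = ctape (run M k b (entry b c)) p].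
Proof.
move=> ab; have ba i (ic : i < c) := esym (ab i ic).
have E : entry a c = entry b c.
  by apply/eqP; rewrite eqn_leq !entry_le_of_agree.
have [q_eq _ t_eq] := run_agree (n := entry a c) (init_agree M ab) (@before_entry a c).
by rewrite -E.
Qed.

Lemma entry_run_eq a b c :
  cstate (run M k a (entry a c)) = cstate (run M k b (entry b c)) ->
  (forall p, p < k + c ->
     ctape (run M k a (entry a c)) p = ctape (run M k b (entry b c)) p) ->
  (forall i, c <= i -> a i = b i) ->
  run M k a (entry a c) = run M k b (entry b c).
Proof.
move=> q_eq low_eq high_eq; apply: config_eq => //; first by rewrite !entry_head.
move=> p; case: (ltnP p (k + c)) => [|cp]; first exact: low_eq.
rewrite !(run_tape_unvisited (@before_entry _ c)) // !run_init_tape.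
by rewrite ltnNge (leq_trans (leq_addr c k) cp) /= high_eq //; lia.
Qed.

Definition quiet m c a := forall t, entry a c <= t ->
  forall j, j < m -> ctape (run M k a t) (k + (3 * j + 1)) = false.

Lemma quiet_mono m c c' a : c <= c' -> quiet m c a -> quiet m c' a.
Proof. by move=> cc' qa t ct; apply: qa; apply: leq_trans (entry_mono a cc') ct. Qed.

Lemma quiet_eventually m a : exists c, quiet m c a.
Proof.
have [N vanish] := gap_cells_vanish a m; exists N => t Nt; apply: vanish.
exact: leq_trans (leq_trans (leq_addl k N) (entry_ge a N)) Nt.
Qed.

Lemma quiet_entry_agree m c a b : 3 * m <= c -> (forall i, i < c -> a i = b i) ->
  quiet m c b -> forall j, j < m -> ctape (run M k a (entry a c)) (k + (3 * j + 1)) = false.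
Proof. by move=> mc ab qb j jm; have [_ _ low] := entry_agree ab; rewrite low ?qb //; lia. Qed.

Definition gap_cells m : seq nat := [seq k + (3 * j + 1) | j <- iota 0 m].

Definition free_cells m c : seq nat := [seq p <- iota 0 (k + c) | p \notin gap_cells m].

Lemma size_free_cells m c : 3 * m <= c -> size (free_cells m c) = k + c - m.
Proof.
move=> mc; rewrite size_iota_notin ?size_map ?size_iota //.
  by rewrite map_inj_uniq ?iota_uniq // => i j; lia.
by apply/allP => x /mapP [j]; rewrite mem_iota => /andP [_ jm] ->; lia.
Qed.

Definition entry_snapshot m c (w : seq bool) : mstate M * seq bool :=
  let cfg := run M k (nth false w) (entry (nth false w) c) in
  (cstate cfg, [seq ctape cfg p | p <- free_cells m c] ++ drop c w).

Lemma entry_snapshot_inj m c n : 3 * m <= c -> c <= n ->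
  {in [seq w <- words n | meets (quiet m c) w] &, injective (entry_snapshot m c)}.
Proof.
move=> mc cn u v; rewrite !mem_filter !mem_words => /andP [qu /eqP un] /andP [qv /eqP vn].
have quiet_pad w : size w = n -> meets (quiet m c) w -> forall j, j < m ->
    ctape (run M k (nth false w) (entry (nth false w) c)) (k + (3 * j + 1)) = false.
  move=> wn /asboolP [b qb bw]; apply: (quiet_entry_agree mc _ qb) => i ic.
  by rewrite -bw nth_mkseq // wn; lia.
case=> q_eq /eqP; rewrite eqseq_cat ?size_map // => /andP [/eqP free_eq /eqP drop_eq].
have pads_eq : nth false u =1 nth false v.
  apply: (@run_eq_input_eq _ _ (entry (nth false u) c) (entry (nth false v) c)).
  apply: entry_run_eq => // [p pc | i ci]; last by rewrite -(subnKC ci) -!nth_drop drop_eq.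
  case: (boolP (p \in gap_cells m)) => [/mapP [j] | p_free].
    by rewrite mem_iota => /andP [_ jm] ->; rewrite !quiet_pad.
  have pF : p \in free_cells m c by rewrite mem_filter p_free mem_iota.
  by move/eq_in_map: free_eq => /(_ p pF).
by apply: (@eq_from_nth _ false) => [|i _]; rewrite ?un ?vn ?pads_eq.
Qed.

Lemma quiet_words_count m c n : 3 * m <= c -> c <= n ->
  count (meets (quiet m c)) (words n) <= #|mstate M| * 2 ^ (k + n - m).
Proof.
move=> mc cn; rewrite -size_filter.
set G := [seq w <- words n | _].
have snap_in : {subset map (entry_snapshot m c) G <=
               [seq (q, s) | q <- enum (mstate M), s <- words (k + n - m)]}.
  move=> _ /mapP [w wG ->]; apply/allpairsP; exists (entry_snapshot m c w).
  move: wG; rewrite mem_filter mem_words => /andP [_ /eqP wn].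
  rewrite /= mem_enum mem_words size_cat size_map size_free_cells // size_drop wn.
  by split => //; apply/eqP; lia.
have := uniq_leq_size _ snap_in; rewrite size_map size_allpairs -cardT size_words; apply.
by rewrite map_inj_in_uniq ?filter_uniq ?words_uniq //; apply: entry_snapshot_inj.
Qed.

End StretchMachine.

Theorem mainTheorem20 :
  forall (k : nat) (M : machine),
    ~ (forall a : real, halts_within_omega_with_output M k a (stretch a)).
Proof.
move=> k M computes.
pose m := 4 * #|mstate M| * 2 ^ k.
have m_big : 4 * #|mstate M| * 2 ^ k <= 2 ^ m by apply/ltnW/ltn_expl.
pose G p := quiet computes m (p + 3 * m).
have G_incr p q a : p <= q -> G p a -> G q a.
  by move=> pq; apply: quiet_mono; rewrite leq_add2r.
have G_sparse p n : p + 3 * m <= n -> 4 * count (meets (G p)) (words n) <= 2 ^ n.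
  move=> pn; have mn : m <= n by lia.
  rewrite (leq_trans (leq_mul (leqnn 4) (quiet_words_count computes _ pn))) ?leq_addl //.
  rewrite -addnBA // expnD -{2}(subnKC mn) expnD !mulnA leq_mul2r.
  by rewrite m_big orbT.
have [a miss] := sparse_chain_not_covering G_incr G_sparse.
have [c qc] := quiet_eventually computes m a.
by apply: (miss c); apply: quiet_mono qc; apply: leq_addr.
Qed.
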